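(* Let $F\subset S^D_+$ be closed, $x_0\in F$, and let $\varphi:(\mathcal M_1(F),|\cdot|_{\mathcal M})\to\mathbb{R}$ be $1$-Lipschitz. For every $\chi\in\mathcal L(F)$ with $|\chi|_{\mathcal L}>1$, we have $\varphi_*(\chi)=-\infty$.
   Context: $S^D_+$ is the positive semidefinite cone of symmetric $D\times D$ matrices with Frobenius norm $|\cdot|$. $\mathcal L(F)$: Lipschitz $\chi:F\to\mathbb{R}$ with $|\chi|_{\mathcal L}=\max\{|\chi(x_0)|,|\chi|_{\mathrm{Lip}}\}$; $\mathcal L_{\le1}(F)$ its unit ball. For signed Borel measures $\nu$ on $F$ with finite first moment, $|\nu|_{\mathcal M}=\sup_{\chi\in\mathcal L_{\le1}(F)}\int\chi\,\mathrm d\nu$, and $\mathcal M_1(F)$ is the completion under this norm (integrals of $\chi\in\mathcal L(F)$ extended by continuity). The concave conjugate is $\varphi_*(\chi)=\inf_{\mu\in\mathcal M_1(F)}\{\int\chi\,\mathrm d\mu-\varphi(\mu)\}$. *)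

From HB Require Import structures.
From mathcomp Require Import all_boot all_order all_algebra.
From mathcomp Require Import all_classical all_reals all_analysis.
Set Implicit Arguments. Unset Strict Implicit. Unset Printing Implicit Defensive.
Import Order.TTheory GRing.Theory Num.Theory.
Import numFieldTopology.Exports numFieldNormedType.Exports.
Local Open Scope classical_set_scope.
Local Open Scope ring_scope.

Section Defs.
Variables (R : realType) (D : nat).

Definition frob (A : 'M[R]_D) : R := Num.sqrt (\sum_i \sum_j A i j ^+ 2).

Definition psd_cone : set 'M[R]_D :=
  [set A | A^T = A /\ forall v : 'cV[R]_D, 0 <= (v^T *m A *m v) ord0 ord0].

(* Borel sigma-algebra on the space of D x D matrices (generated by the open
   sets of the standard (product = Frobenius) topology). *)
Definition Mborel := g_sigma_algebraType (open : set (set 'M[R]_(D, D))).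

Variables (F : set 'M[R]_D) (x0 : 'M[R]_D).

Definition lipF (chi : 'M[R]_D -> R) : Prop :=
  exists C : R, forall x y, F x -> F y -> `|chi x - chi y| <= C * frob (x - y).

Definition lip_semi (chi : 'M[R]_D -> R) : R :=
  sup [set r | exists x y, [/\ F x, F y, x != y & r = `|chi x - chi y| / frob (x - y)]].

Definition lipL_norm (chi : 'M[R]_D -> R) : R := Num.max `|chi x0| (lip_semi chi).

Definition Lunit : set ('M[R]_D -> R) := [set chi | lipF chi /\ lipL_norm chi <= 1].

(* A signed Borel measure as a pair (positive part, negative part). *)
Record smeasure := SMeasure {
  smp : {measure set Mborel -> \bar R};
  smn : {measure set Mborel -> \bar R} }.

Definition fm_measure (mu : {measure set Mborel -> \bar R}) : Prop :=
  [/\ (mu setT < +oo)%E, mu (~` F) = 0%E &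
      (\int[mu]_(x in (F : set Mborel)) (frob (x - x0))%:E < +oo)%E].

Definition sm_valid (nu : smeasure) : Prop := fm_measure (smp nu) /\ fm_measure (smn nu).

Definition sint (chi : 'M[R]_D -> R) (nu : smeasure) : R :=
  fine (\int[smp nu]_(x in (F : set Mborel)) (chi x)%:E)
  - fine (\int[smn nu]_(x in (F : set Mborel)) (chi x)%:E).

Definition dM (nu1 nu2 : smeasure) : R :=
  sup [set sint chi nu1 - sint chi nu2 | chi in Lunit].

(* Completion M_1(F): Cauchy sequences (for |.|_M) of valid signed measures;
   two sequences at distance 0 represent the same element. *)
Definition M1 : set (nat -> smeasure) :=
  [set u | (forall n, sm_valid (u n)) /\
     forall e : R, 0 < e -> exists N : nat, forall m n : nat,
       (N <= m)%N -> (N <= n)%N -> dM (u m) (u n) <= e].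

Definition dM1 (u v : nat -> smeasure) : R := limn (fun n => dM (u n) (v n)).

(* Integral of chi against an element of the completion (extension by continuity). *)
Definition M1int (chi : 'M[R]_D -> R) (u : nat -> smeasure) : R :=
  limn (fun n => sint chi (u n)).

Definition conc_conj (phi : (nat -> smeasure) -> R) (chi : 'M[R]_D -> R) : \bar R :=
  ereal_inf [set (M1int chi u - phi u)%:E | u in M1].

End Defs.

From HB Require Import structures.
From mathcomp Require Import all_boot all_order all_algebra.
From mathcomp Require Import all_classical all_reals all_analysis.
From mathcomp Require Import measurable_realfun lra.
Import Order.TTheory GRing.Theory Num.Theory.
Import numFieldTopology.Exports numFieldNormedType.Exports.
Import HBNNSimple.
Local Open Scope classical_set_scope.
Local Open Scope ring_scope.

(* If |chi(x0)| > 1, or if some pair p <> q in F has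
   |chi p - chi q| > |p - q|, then there is a two-point signed measure
   nu = al delta_p - be delta_q and a d >= 0 such that int f dnu <= d for every
   f in the unit ball L_{<=1}(F) while int chi dnu < -d.  As phi is 1-Lipschitz,
   phi(t nu) >= phi(0) - t d, hence
   int chi d(t nu) - phi(t nu) <= t (int chi dnu + d) - phi(0),
   which tends to -oo as t -> +oo. *)

Section mscale_dirac.
Context {d : measure_display} {T : measurableType d} {R : realType}.
Variables (t : {nonneg R}) (a : T).

Lemma sintegral_mscale_dirac (h : {nnsfun T >-> R}) :
  sintegral (mscale t \d_a) h = (t%:num * h a)%:E.
Proof.
have mh : measurable_fun setT (EFin \o h) by exact/measurable_EFinP.
have := integral_nnsfun (mscale t \d_a) measurableT h.
rewrite patch_setT => <-.
rewrite ge0_integral_mscale //; last by move=> x _; rewrite lee_fin.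
by rewrite integral_dirac // diracT mul1e.
Qed.

(* No measurability of [g] is needed: the simple function [r 1_{a}] attains
   the supremum defining the integral. *)
Lemma ge0_integral_mscale_dirac (A : set T) (g : T -> \bar R) (r : R) :
  measurable [set a] -> A a -> (forall x, A x -> 0 <= g x)%E -> g a = r%:E ->
  (\int[mscale t \d_a]_(x in A) g x = (t%:num * r)%:E)%E.
Proof.
move=> ma Aa g0 gar.
have r0 : 0 <= r by rewrite -lee_fin -gar; exact: g0.
rewrite ge0_integralE //; apply/eqP; rewrite eq_le; apply/andP; split.
  apply: ge_ereal_sup => _ [h hle <-].
  rewrite sintegral_mscale_dirac lee_fin ler_wpM2l //.
  by have := hle a; rewrite /patch mem_set // gar lee_fin.
apply: ereal_sup_ubound; exists (scale_nnsfun (indic_nnsfun R ma) r0).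
  move=> x /=; rewrite /patch mindicE.
  have [/set_mem ->|_] := boolP (x \in [set a]); first by rewrite mem_set // gar mulr1.
  by rewrite mulr0; case: ifPn => // /set_mem; exact: g0.
by rewrite sintegral_mscale_dirac /= mindicE mem_set // mulr1.
Qed.

Lemma integral_mscale_dirac (A : set T) (f : T -> R) :
  measurable [set a] -> A a ->
  (\int[mscale t \d_a]_(x in A) (f x)%:E = (t%:num * f a)%:E)%E.
Proof.
move=> ma Aa; rewrite integralE.
rewrite (@ge0_integral_mscale_dirac _ _ (Num.max (f a) 0)) //; last first.
  by rewrite funeposE -EFin_max.
rewrite (@ge0_integral_mscale_dirac _ _ (Num.max (- f a) 0)) //; last first.
  by rewrite funenegE -EFin_max.
rewrite -EFinB -mulrBr; congr (_ * _)%:E.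
by rewrite !maxEle; case: ifP => ?; case: ifP => ?; lra.
Qed.

End mscale_dirac.

Lemma ge_sup_ge0 {R : realType} (E : set R) (x : R) :
  0 <= x -> ubound E x -> sup E <= x.
Proof.
move=> x0 Ex; have [->|/set0P E0] := eqVneq E set0; first by rewrite sup0.
exact: ge_sup.
Qed.

Lemma eq_ninfty_linear_ub {R : realType} (x : \bar R) (g c : R) : g < 0 ->
  (forall t : {nonneg R}, (x <= (t%:num * g + c)%:E)%E) -> x = -oo%E.
Proof.
move=> g_lt0 xle; apply: eq_ninfty => M.
have t_ge0 : 0 <= (`|M| + `|c|) / - g by rewrite divr_ge0 ?addr_ge0 // oppr_ge0 ltW.
apply: le_trans (xle (NngNum t_ge0)) _; rewrite lee_fin /=.
rewrite invrN mulrN mulNr divfK ?lt_eqF //.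
have := ler_norm (- M); have := ler_norm c; rewrite normrN; lra.
Qed.

Section frobenius.
Context {R : realType} {D : nat}.
Implicit Types A : 'M[R]_D.

Lemma frob_ge0 A : 0 <= frob A.
Proof. exact: sqrtr_ge0. Qed.

Lemma frobN A : frob (- A) = frob A.
Proof.
by congr Num.sqrt; apply: eq_bigr => i _; apply: eq_bigr => j _; rewrite mxE sqrrN.
Qed.

Lemma frob_gt0 A : A != 0 -> 0 < frob A.
Proof.
move=> A0; rewrite sqrtr_gt0 lt_def sumr_ge0 ?andbT; last first.
  by move=> i _; apply: sumr_ge0 => j _; exact: sqr_ge0.
apply: contra A0 => /eqP A2; apply/eqP/matrixP => i j.
have Ai : \sum_j A i j ^+ 2 = 0.
  by apply: (psumr_eq0P _ A2) => // k _; apply: sumr_ge0 => l _; exact: sqr_ge0.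
have /eqP : A i j ^+ 2 = 0 by apply: (psumr_eq0P _ Ai) => // k _; exact: sqr_ge0.
by rewrite sqrf_eq0 mxE => /eqP.
Qed.

Lemma measurable_set1_matrix (a : Mborel R D) : measurable [set a].
Proof.
rewrite -[[set a]]setCK; apply: measurableC; apply: sub_sigma_algebra.
apply: closed_openC.
apply: compact_closed; first exact: norm_hausdorff.
exact: compact_set1.
Qed.

End frobenius.

Section lipschitz_dual.
Context {R : realType} {D : nat} {F : set 'M[R]_D} {x0 : 'M[R]_D}.
Implicit Types (f chi : 'M[R]_D -> R) (p q : 'M[R]_D).

Lemma lip_semi_ge f p q : lipF F f -> F p -> F q -> p != q ->
  `|f p - f q| / frob (p - q) <= lip_semi F f.
Proof.
move=> [C fC] Fp Fq pq; apply: ub_le_sup; last by exists p, q.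
exists C => _ [x [y [Fx Fy xy ->]]].
by rewrite ler_pdivrMr ?fC // frob_gt0 // subr_eq0.
Qed.

Lemma Lunit_x0 f : Lunit F x0 f -> `|f x0| <= 1.
Proof. by case=> _; rewrite ge_max => /andP[]. Qed.

Lemma Lunit_lip f p q : Lunit F x0 f -> F p -> F q -> `|f p - f q| <= frob (p - q).
Proof.
case=> fL; rewrite ge_max => /andP[_ f1] Fp Fq.
have [->|pq] := eqVneq p q; first by rewrite !subrr normr0 frob_ge0.
have pq0 : 0 < frob (p - q) by rewrite frob_gt0 // subr_eq0.
by rewrite -[frob _]mul1r -ler_pdivrMr // (le_trans _ f1) // lip_semi_ge.
Qed.

Definition two_point (al be : {nonneg R}) p q : smeasure R D :=
  SMeasure (mscale al (@dirac _ (Mborel R D) p R)) (mscale be (@dirac _ (Mborel R D) q R)).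

Lemma fm_measure_mscale_dirac (t : {nonneg R}) (a : Mborel R D) :
  F a -> fm_measure F x0 (mscale t \d_a).
Proof.
move=> Fa; split.
- by rewrite /= /mscale /= diracT mule1 ltry.
- by rewrite /= /mscale /= diracE memNset ?mule0.
- by rewrite integral_mscale_dirac ?ltry //; exact: measurable_set1_matrix.
Qed.

Lemma sm_valid_two_point al be p q : F p -> F q -> sm_valid F x0 (two_point al be p q).
Proof. by move=> Fp Fq; split; exact: fm_measure_mscale_dirac. Qed.

Lemma sint_two_point f al be p q : F p -> F q ->
  sint F f (two_point al be p q) = al%:num * f p - be%:num * f q.
Proof.
by move=> Fp Fq; rewrite /sint /= !integral_mscale_dirac //; exact: measurable_set1_matrix.
Qed.

Lemma M1_cst u : sm_valid F x0 u -> M1 F x0 (fun=> u).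
Proof.
move=> uV; split => // e e0; exists 0%N => m n _ _.
by apply: ge_sup_ge0 (ltW e0) _ => _ [f _ <-]; rewrite subrr ltW.
Qed.

Lemma dM1_cst u v : dM1 F x0 (fun=> u) (fun=> v) = dM F x0 u v.
Proof. by rewrite /dM1 lim_cst. Qed.

Lemma M1int_cst chi u : M1int F chi (fun=> u) = sint F chi u.
Proof. by rewrite /M1int lim_cst. Qed.

Lemma conc_conj_le phi chi {u z} :
  (forall u v, M1 F x0 u -> M1 F x0 v -> `|phi u - phi v| <= dM1 F x0 u v) ->
  M1 F x0 u -> M1 F x0 z ->
  (conc_conj F x0 phi chi <= (M1int F chi u + dM1 F x0 u z - phi z)%:E)%E.
Proof.
move=> phi_lip Mu Mz; apply: le_trans (ereal_inf_lbound _) _; first by exists u.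
have /ler_normlP[+ _] := phi_lip _ _ Mu Mz; rewrite lee_fin; lra.
Qed.

End lipschitz_dual.

Definition gap_witness {R : realType} {D : nat} (F : set 'M[R]_D) (x0 : 'M[R]_D)
    (chi : 'M[R]_D -> R) (p q : 'M[R]_D) (al be : {nonneg R}) (d : R) :=
  [/\ F p, F q, 0 <= d,
   forall f, Lunit F x0 f -> al%:num * f p - be%:num * f q <= d &
   al%:num * chi p - be%:num * chi q + d < 0].

Definition scaled_two_point {R : realType} {D : nat} (al be : {nonneg R}) (p q : 'M[R]_D)
    (t : {nonneg R}) : nat -> smeasure R D :=
  fun=> two_point (t%:num * al%:num)%:nng (t%:num * be%:num)%:nng p q.

Section gap_witness.
Context {R : realType} {D : nat} {F : set 'M[R]_D} {x0 : 'M[R]_D}.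
Implicit Types (f chi : 'M[R]_D -> R) (p q : 'M[R]_D).
Local Notation gap_witness := (gap_witness F x0).

Lemma gap_witness_x0 chi : F x0 -> 1 < `|chi x0| ->
  exists al be, gap_witness chi x0 x0 al be 1.
Proof.
move=> Fx0; have [chi0 chi1|chi0 chi1] := lerP 0 (chi x0).
- exists 0%:nng, 1%:nng; split => //= [f /Lunit_x0 f1|]; rewrite mul0r mul1r sub0r.
  + by rewrite (le_trans _ f1) // -normrN ler_norm.
  + by move: chi1; rewrite ger0_norm //; lra.
- exists 1%:nng, 0%:nng; split => //= [f /Lunit_x0 f1|]; rewrite mul0r mul1r subr0.
  + exact: le_trans (ler_norm _) f1.
  + by move: chi1; rewrite ltr0_norm //; lra.
Qed.

Lemma gap_witness_pair chi p q : F p -> F q -> frob (p - q) < chi q - chi p ->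
  gap_witness chi p q 1%:nng 1%:nng (frob (p - q)).
Proof.
move=> Fp Fq chi_pq; split => //=; first exact: frob_ge0.
- by move=> f /Lunit_lip fL; rewrite !mul1r (le_trans (ler_norm _) (fL p q Fp Fq)).
- by rewrite !mul1r; lra.
Qed.

Lemma gap_witness_lip chi : lipF F chi -> 1 < lip_semi F chi ->
  exists p q, gap_witness chi p q 1%:nng 1%:nng (frob (p - q)).
Proof.
move=> chiL chi1; have [|_ [x [y [Fx Fy xy ->]]]] := sup_gt _ chi1.
  by apply/set0P/negP => /eqP E; rewrite /lip_semi E sup0 ltr10 in chi1.
rewrite ltr_pdivlMr ?frob_gt0 ?subr_eq0 // mul1r.
have [_|_] := lerP (chi y) (chi x) => chi_xy.
- by exists y, x; apply: gap_witness_pair; rewrite // -frobN opprB.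
- by exists x, y; exact: gap_witness_pair.
Qed.

Lemma exists_gap_witness chi : F x0 -> lipF F chi -> 1 < lipL_norm F x0 chi ->
  exists p q al be d, gap_witness chi p q al be d.
Proof.
move=> Fx0 chiL; rewrite lt_max => /orP[/(gap_witness_x0 _ Fx0)|/(gap_witness_lip _ chiL)].
- by move=> [al [be W]]; exists x0, x0, al, be, 1.
- by move=> [p [q W]]; exists p, q, 1%:nng, 1%:nng, (frob (p - q)).
Qed.

Lemma M1_scaled_two_point al be p q t : F p -> F q -> M1 F x0 (scaled_two_point al be p q t).
Proof. by move=> Fp Fq; apply/M1_cst/sm_valid_two_point. Qed.

Lemma M1int_scaled_two_point chi al be p q t : F p -> F q ->
  M1int F chi (scaled_two_point al be p q t) = t%:num * (al%:num * chi p - be%:num * chi q).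
Proof. by move=> Fp Fq; rewrite M1int_cst sint_two_point //= mulrBr !mulrA. Qed.

Lemma dM1_scaled_two_point_le chi al be p q d t : gap_witness chi p q al be d ->
  dM1 F x0 (scaled_two_point al be p q t) (scaled_two_point al be p q 0%:nng) <= t%:num * d.
Proof.
case=> Fp Fq d0 dual _; rewrite dM1_cst; apply: ge_sup_ge0 => [|_ [f /dual fd <-]].
  exact: mulr_ge0.
by rewrite !sint_two_point //= !mul0r subrr subr0 -!mulrA -mulrBr ler_wpM2l.
Qed.

Lemma conc_conj_le_gap {phi chi al be p q d} :
  (forall u v, M1 F x0 u -> M1 F x0 v -> `|phi u - phi v| <= dM1 F x0 u v) ->
  gap_witness chi p q al be d -> forall t : {nonneg R},
  (conc_conj F x0 phi chi <= (t%:num * (al%:num * chi p - be%:num * chi q + d)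
                              - phi (scaled_two_point al be p q 0%:nng))%:E)%E.
Proof.
move=> phi_lip W t; have [Fp Fq _ _ _] := W.
have Mnu s : M1 F x0 (scaled_two_point al be p q s) by exact: M1_scaled_two_point.
apply: le_trans (conc_conj_le phi chi phi_lip (Mnu t) (Mnu 0%:nng)) _.
rewrite lee_fin lerD2r M1int_scaled_two_point // [X in _ <= X]mulrDr lerD2l.
exact: dM1_scaled_two_point_le W.
Qed.

End gap_witness.

Theorem proposition3p4 (R : realType) (D : nat) (F : set 'M[R]_D) (x0 : 'M[R]_D)
  (phi : (nat -> smeasure R D) -> R) (chi : 'M[R]_D -> R) :
  closed F -> F `<=` @psd_cone R D -> F x0 ->
  (forall u v, M1 F x0 u -> M1 F x0 v -> `|phi u - phi v| <= dM1 F x0 u v) ->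
  lipF F chi -> 1 < lipL_norm F x0 chi ->
  conc_conj F x0 phi chi = -oo%E.
Proof.
move=> _ _ Fx0 phi_lip chiL chi1.
have [p [q [al [be [d W]]]]] := exists_gap_witness chi Fx0 chiL chi1.
have [_ _ _ _ gap_lt0] := W.
exact: eq_ninfty_linear_ub gap_lt0 (conc_conj_le_gap phi_lip W).
Qed.
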